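(* For $k\in\mathbb N$ and $i\in\{1,2\}$ let $\mathcal E_k^i$ and $\tilde{\mathcal E}_k^i$ be the Hamiltonian vector fields of $h_k=\frac1k\Re\operatorname{tr}(J^k)$ and $\tilde h_k=\frac1k\Im\operatorname{tr}(J^k)$ with respect to $\{\ ,\ \}_i^{\mathrm{red}}$. Then $$\mathcal E_k^2[q_j]=\mathcal E_{k+1}^1[q_j]=\Re(J^k)_{jj},\qquad \mathcal E_k^2[J]=\mathcal E_{k+1}^1[J]=\tfrac12\big[R(q)(J^k+(J^k)^* )+((J^k)^*-J^k),J\big],$$ $$\tilde{\mathcal E}_k^2[q_j]=\tilde{\mathcal E}_{k+1}^1[q_j]=\Re(-\mathrm iJ^k)_{jj},\qquad \tilde{\mathcal E}_k^2[J]=\tilde{\mathcal E}_{k+1}^1[J]=\tfrac12\big[\mathrm iR(q)((J^k)^*-J^k)+\mathrm i(J^k+(J^k)^* ),J\big].$$ All these vector fields are tangent to the submanifold $\mathfrak M_{0,-}^{\mathrm{reg}}=\{(e^q,J)\in\mathfrak M_0^{\mathrm{reg}}:J^+=0\}$ and to $\mathfrak M_{0,+}^{\mathrm{reg}}=\{(e^q,J)\in\mathfrak M_0^{\mathrm{reg}}:J^-=0\}$. The restrictions $\mathcal V_k^i$ of $\mathcal E_k^i$ to $\mathfrak M_{0,-}^{\mathrm{reg}}$ satisfy $$\mathcal V_k^2[q_j]=\mathcal V_{k+1}^1[q_j]=((J^-)^k)_{jj},\qquad \mathcal V_k^2[J^-]=\mathcal V_{k+1}^1[J^-]=[R(q)(J^-)^k,J^-],$$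 while the restrictions of all $\tilde{\mathcal E}_k^i$ to $\mathfrak M_{0,-}^{\mathrm{reg}}$ vanish. Denoting by $\mathcal U_k^i,\tilde{\mathcal U}_k^i$ the restrictions of $\mathcal E_k^i,\tilde{\mathcal E}_k^i$ to $\mathfrak M_{0,+}^{\mathrm{reg}}$, for all $l\in\mathbb N$: $\mathcal U^2_{2l-1}=\mathcal U^1_{2l}=0$, $\tilde{\mathcal U}^2_{2l}=\tilde{\mathcal U}^1_{2l+1}=0$, and $$\mathcal U^2_{2l}[q_j]=\mathcal U^1_{2l+1}[q_j]=\Re((J^+)^{2l})_{jj},\quad \mathcal U^2_{2l}[J^+]=\mathcal U^1_{2l+1}[J^+]=[R(q)(J^+)^{2l},J^+],$$ $$\tilde{\mathcal U}^2_{2l-1}[q_j]=\tilde{\mathcal U}^1_{2l}[q_j]=\Re(-\mathrm i(J^+)^{2l-1})_{jj},\quad \tilde{\mathcal U}^2_{2l-1}[J^+]=\tilde{\mathcal U}^1_{2l}[J^+]=[-\mathrm iR(q)(J^+)^{2l-1},J^+].$$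
   Context: $\mathcal G=\mathfrak{gl}(n,\mathbb C)$ (real Lie algebra) with $\langle X,Y\rangle=\Re\operatorname{tr}(XY)$. $\mathcal G^+=\mathfrak u(n)$ (anti-Hermitian), $\mathcal G^-=\mathrm i\,\mathfrak u(n)$ (Hermitian); $X=X^++X^-$ with $X^\pm=\frac12(X\mp X^* )$; $\mathcal G^\pm_0$ are the diagonal matrices in $\mathcal G^\pm$ and $X^-_0$ denotes the diagonal part of $X^-$. $\mathfrak M_0^{\mathrm{reg}}=\{(e^q,J): J\in\mathcal G,\ q=\mathrm{diag}(q_1,\dots,q_n),\ q_i\in\mathbb R,\ q_1>\dots>q_n\}$. For $f\in C^\infty(\mathfrak M_0^{\mathrm{reg}})$: $\nabla_1f\in\mathcal G^-_0$ with $\langle\nabla_1f,X_0\rangle=\frac{d}{dt}|_0f(e^{q+tX_0},J)$ ($X_0\in\mathcal G_0^-$), $d_2f\in\mathcal G$ with $\langle d_2f,X\rangle=\frac{d}{dt}|_0f(e^q,J+tX)$, $\nabla_2f=J\,d_2f$, $\nabla_2'f=(d_2f)J$. $R(q)\in\mathrm{End}(\mathcal G)$: $(R(q)X)_{ii}=0$, $(R(q)X)_{ij}=X_{ij}\coth(q_i-q_j)$ for $i\ne j$. The following formulas define anti-symmetric bi-derivations on $C^\infty(\mathfrak M_0^{\mathrm{reg}})$ (derivatives at $(e^q,J)$): $\{f,h\}_1^{\mathrm{red}}=\langle\nabla_1f,(d_2h)^-_0\rangle-\langle\nabla_1h,(d_2f)^-_0\rangle+\langle R(q)[d_2f,J]^+,(d_2h)^-\rangle-\langle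 R(q)[d_2h,J]^+,(d_2f)^-\rangle+\langle J^+,[(d_2f)^-,(d_2h)^-]-[(d_2f)^+,(d_2h)^+]\rangle$; $2\{f,h\}_2^{\mathrm{red}}=\langle\nabla_1f,(\nabla_2h+\nabla_2'h)^-_0\rangle-\langle\nabla_1h,(\nabla_2f+\nabla_2'f)^-_0\rangle+\langle R(q)[d_2f,J]^+,(\nabla_2h+\nabla_2'h)^-\rangle-\langle R(q)[d_2h,J]^+,(\nabla_2f+\nabla_2'f)^-\rangle+\langle(\nabla_2f)^-,(\nabla_2'h)^-\rangle+\langle(\nabla_2'f)^+,(\nabla_2h)^+\rangle-\langle(\nabla_2'f)^-,(\nabla_2h)^-\rangle-\langle(\nabla_2f)^+,(\nabla_2'h)^+\rangle$. A vector field $\mathcal E$ on $\mathfrak M_0^{\mathrm{reg}}$ is encoded by the functions $\mathcal E[q]$ ($\mathcal G_0^-$-valued, with diagonal entries $\mathcal E[q_j]$) and $\mathcal E[J]$ ($\mathcal G$-valued), so that $\mathcal E[f]=\langle\nabla_1f,\mathcal E[q]\rangle+\langle d_2f,\mathcal E[J]\rangle$; we write $\mathcal E[J^\pm]=(\mathcal E[J])^\pm$. For a $\mathbb T^n$-invariant $h$ (invariant under $(e^q,J)\mapsto(e^q,\tau J\tau^{-1})$, $\tau$ diagonal unitary), its Hamiltonian vector field w.r.t. $\{\ ,\ \}_i^{\mathrm{red}}$ is the vector field $\mathcal E^i_h$ with $\mathcal E_h^i[f]=\{f,h\}_i^{\mathrm{red}}$ for all $f\in C^\infty(\mathfrak M_0^{\mathrm{reg}})$.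 *)

From HB Require Import structures.
From mathcomp Require Import all_boot all_order all_algebra.
From mathcomp Require Import all_classical all_reals all_analysis.
From mathcomp Require Import complex.

Set Implicit Arguments.
Unset Strict Implicit.
Unset Printing Implicit Defensive.

Import Order.TTheory GRing.Theory Num.Theory.
Local Open Scope ring_scope.

Definition ci {R : realType} : R[i] := Complex 0 1.
Definition cre {R : realType} (z : R[i]) : R := complex.Re z.
Definition cim {R : realType} (z : R[i]) : R := complex.Im z.
Definition rc {R : realType} (x : R) : R[i] := Complex x 0.

Definition adj {R : realType} {n : nat} (X : 'M[R[i]]_n) : 'M[R[i]]_n :=
  \matrix_(a, b) conjc (X b a).

Definition plusp {R : realType} {n : nat} (X : 'M[R[i]]_n) : 'M[R[i]]_n :=
  (2%:R : R[i])^-1 *: (X - adj X).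
Definition minusp {R : realType} {n : nat} (X : 'M[R[i]]_n) : 'M[R[i]]_n :=
  (2%:R : R[i])^-1 *: (X + adj X).

Definition diag0 {R : realType} {n : nat} (X : 'M[R[i]]_n) : 'M[R[i]]_n :=
  \matrix_(a, b) (if a == b then X a b else 0).

Definition ip {R : realType} {n : nat} (X Y : 'M[R[i]]_n) : R :=
  cre (\tr (X *m Y)).

Definition lie {R : realType} {n : nat} (X Y : 'M[R[i]]_n) : 'M[R[i]]_n :=
  X *m Y - Y *m X.

Definition coth {R : realType} (x : R) : R :=
  (expR x + expR (- x)) / (expR x - expR (- x)).

Definition Rq {R : realType} {n : nat} (q : 'I_n -> R) (X : 'M[R[i]]_n)
  : 'M[R[i]]_n :=
  \matrix_(a, b) (if a == b then 0 else X a b * rc (coth (q a - q b))).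

(* The manifold M_0^reg.  A point (e^q, J) is encoded by (q, J) with       *)
(* q : 'I_n -> R the diagonal entries of q; functions on M_0^reg are       *)
(* functions of (q, J) (their values off M_0^reg are irrelevant).          *)

Definition reg {R : realType} {n : nat} (q : 'I_n -> R) : Prop :=
  forall a b : 'I_n, (a < b)%N -> q b < q a.

Definition fn (R : realType) (n : nat) := ('I_n -> R) -> 'M[R[i]]_n -> R.

Definition line {R : realType} {n : nat} (f : fn R n) (q : 'I_n -> R)
  (J : 'M[R[i]]_n) (v : ('I_n -> R) * 'M[R[i]]_n) : R -> R :=
  fun t => f (fun k => q k + t * v.1 k) (J + rc t *: v.2).

Definition dirD {R : realType} {n : nat} (v : ('I_n -> R) * 'M[R[i]]_n)
  (f : fn R n) : fn R n :=
  fun q J => derive1 (line f q J v) 0.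

Fixpoint iterD {R : realType} {n : nat} (vs : seq (('I_n -> R) * 'M[R[i]]_n))
  (f : fn R n) : fn R n :=
  match vs with
  | [::] => f
  | v :: vs' => dirD v (iterD vs' f)
  end.

Definition cont_at {R : realType} {n : nat} (g : fn R n) (q : 'I_n -> R)
  (J : 'M[R[i]]_n) : Prop :=
  forall e : R, 0 < e -> exists2 d : R, 0 < d &
    forall (q' : 'I_n -> R) (J' : 'M[R[i]]_n), (forall k, `|q' k - q k| < d) ->
      (forall a b, `|J' a b - J a b| < rc d) -> `|g q' J' - g q J| < e.

(* f is C^oo on M_0^reg (an open subset of R^n x gl(n,C)): all iterated
   directional derivatives exist and are continuous on M_0^reg. *)
Definition smooth {R : realType} {n : nat} (f : fn R n) : Prop :=
  forall vs : seq (('I_n -> R) * 'M[R[i]]_n), forall q J, reg q ->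
    cont_at (iterD vs f) q J /\
    (forall v, derivable (line (iterD vs f) q J v) 0 1).

(* nabla_1 f in G_0^- : <nabla_1 f, X_0> = d/dt f(e^{q+tX_0}, J) *)
Definition nabla1 {R : realType} {n : nat} (f : fn R n) (q : 'I_n -> R)
  (J : 'M[R[i]]_n) : 'M[R[i]]_n :=
  \matrix_(a, b) (if a == b
                  then rc (dirD ((fun k => (k == a)%:R), 0) f q J)
                  else 0).

(* d_2 f in G : <d_2 f, X> = d/dt f(e^q, J + tX).  Writing out the defining
   identity on the real basis E_ba, i E_ba of G gives
   (d_2 f)_ab = D_{E_ba} f - i D_{i E_ba} f. *)
Definition dir2 {R : realType} {n : nat} (f : fn R n) (q : 'I_n -> R)
  (J : 'M[R[i]]_n) (X : 'M[R[i]]_n) : R :=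
  dirD ((fun _ => 0), X) f q J.

Definition d2 {R : realType} {n : nat} (f : fn R n) (q : 'I_n -> R)
  (J : 'M[R[i]]_n) : 'M[R[i]]_n :=
  \matrix_(a, b) (rc (dir2 f q J (delta_mx b a))
                  - ci * rc (dir2 f q J (ci *: delta_mx b a))).

Definition nabla2 {R : realType} {n : nat} (f : fn R n) q (J : 'M[R[i]]_n) :=
  J *m d2 f q J.
Definition nabla2' {R : realType} {n : nat} (f : fn R n) q (J : 'M[R[i]]_n) :=
  d2 f q J *m J.

Definition br1 {R : realType} {n : nat} (f h : fn R n) (q : 'I_n -> R)
  (J : 'M[R[i]]_n) : R :=
  let df := d2 f q J in let dh := d2 h q J in
  ip (nabla1 f q J) (diag0 (minusp dh)) - ip (nabla1 h q J) (diag0 (minusp df))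
  + ip (Rq q (plusp (lie df J))) (minusp dh)
  - ip (Rq q (plusp (lie dh J))) (minusp df)
  + ip (plusp J) (lie (minusp df) (minusp dh) - lie (plusp df) (plusp dh)).

Definition br2 {R : realType} {n : nat} (f h : fn R n) (q : 'I_n -> R)
  (J : 'M[R[i]]_n) : R :=
  let df := d2 f q J in let dh := d2 h q J in
  let Nf := nabla2 f q J in let Nf' := nabla2' f q J in
  let Nh := nabla2 h q J in let Nh' := nabla2' h q J in
  (2%:R)^-1 *
  (ip (nabla1 f q J) (diag0 (minusp (Nh + Nh')))
   - ip (nabla1 h q J) (diag0 (minusp (Nf + Nf')))
   + ip (Rq q (plusp (lie df J))) (minusp (Nh + Nh'))
   - ip (Rq q (plusp (lie dh J))) (minusp (Nf + Nf'))
   + ip (minusp Nf) (minusp Nh') + ip (plusp Nf') (plusp Nh)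
   - ip (minusp Nf') (minusp Nh) - ip (plusp Nf) (plusp Nh')).

(* A vector field E on M_0^reg is encoded by E[q] (given by its diagonal
   entries E[q_j], EQ q J j) and E[J] (EJ q J). *)
Definition vfq (R : realType) (n : nat) := ('I_n -> R) -> 'M[R[i]]_n -> 'I_n -> R.
Definition vfJ (R : realType) (n : nat) := ('I_n -> R) -> 'M[R[i]]_n -> 'M[R[i]]_n.

Definition diagq {R : realType} {n : nat} (x : 'I_n -> R) : 'M[R[i]]_n :=
  \matrix_(a, b) (if a == b then rc (x a) else 0).

Definition vf_apply {R : realType} {n : nat} (EQ : vfq R n) (EJ : vfJ R n)
  (f : fn R n) (q : 'I_n -> R) (J : 'M[R[i]]_n) : R :=
  ip (nabla1 f q J) (diagq (EQ q J)) + ip (d2 f q J) (EJ q J).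

Definition IsHam {R : realType} {n : nat}
  (br : fn R n -> fn R n -> ('I_n -> R) -> 'M[R[i]]_n -> R)
  (h : fn R n) (EQ : vfq R n) (EJ : vfJ R n) : Prop :=
  forall f : fn R n, smooth f ->
    forall q J, reg q -> vf_apply EQ EJ f q J = br f h q J.

Definition IsHam1 {R : realType} {n : nat} := @IsHam R n br1.
Definition IsHam2 {R : realType} {n : nat} := @IsHam R n br2.

Definition agree {R : realType} {n : nat} (EQ : vfq R n) (EJ : vfJ R n)
  (FQ : vfq R n) (FJ : vfJ R n) : Prop :=
  forall q J, reg q -> (forall j, EQ q J j = FQ q J j) /\ EJ q J = FJ q J.

Definition hk {R : realType} {n : nat} (k : nat) : fn R n :=
  fun _ J => (k%:R)^-1 * cre (\tr (J ^+ k)).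
Definition htk {R : realType} {n : nat} (k : nat) : fn R n :=
  fun _ J => (k%:R)^-1 * cim (\tr (J ^+ k)).

(* Both Hamiltonians h = h_k and h = ~h_k depend on J only, and d_2 h is a
   polynomial in J: d_2 h_{m+1} = J^m and d_2 ~h_{m+1} = -i J^m.  Hence
   [d_2 h, J] = 0 and nabla_2 h = nabla_2' h = J d_2 h.  With these identities,
   the ad-invariance of <,>, the skew-symmetry of R(q) and the orthogonality of
   X = X^+ + X^- collapse both {f, h_{k+1}}_1 and {f, h_k}_2 (resp. for ~h) to
   <nabla_1 f, Y^-_0> + <d_2 f, 1/2 [R(q)(Y + Y^* ) + (Y^* - Y), J]> with
   Y = J^k (resp. -i J^k).  Affine coordinate functions are smooth, so a vector
   field is determined by its action on smooth functions, which identifies the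
   Hamiltonian fields with this explicit field.  When J is Hermitian or
   anti-Hermitian, so are J^k and -i J^k, according to the parity of k; the
   explicit field is then [R(q) Y, J] for Hermitian Y and vanishes for
   anti-Hermitian Y, which gives tangency and the restricted formulas. *)

From HB Require Import structures.
From mathcomp Require Import all_boot all_order all_algebra.
From mathcomp Require Import all_classical all_reals all_analysis.
From mathcomp Require Import complex ring lra zify.

Import Order.TTheory GRing.Theory Num.Theory.
Local Open Scope ring_scope.

Section ComplexParts.
Context {R : realType}.
Implicit Types (a b z : R[i]) (r : R).

Lemma creD a b : cre (a + b) = cre a + cre b. Proof. by case: a; case: b. Qed.
Lemma creN a : cre (- a) = - cre a. Proof. by case: a. Qed.
Lemma creB a b : cre (a - b) = cre a - cre b. Proof. by rewrite creD creN. Qed.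
Lemma creM a b : cre (a * b) = cre a * cre b - cim a * cim b.
Proof. by case: a; case: b. Qed.
Lemma cimD a b : cim (a + b) = cim a + cim b. Proof. by case: a; case: b. Qed.
Lemma cimM a b : cim (a * b) = cre a * cim b + cim a * cre b.
Proof. by case: a => ? ?; case: b => ? ?; rewrite /cim /cre /= addrC. Qed.
Lemma cre_conj z : cre (conjc z) = cre z. Proof. by case: z. Qed.
Lemma cre_rcM r a : cre (rc r * a) = r * cre a.
Proof. by case: a => x y; rewrite /cre /rc /= mul0r subr0. Qed.
Lemma cim_rcM r a : cim (rc r * a) = r * cim a.
Proof. by case: a => x y; rewrite /cim /rc /= mul0r addr0. Qed.
Lemma cre_ciM a : cre (ci * a) = - cim a.
Proof. by case: a => x y; rewrite /cre /ci /cim /= mul0r mul1r sub0r. Qed.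

Lemma cre_sum (I : finType) (F : I -> R[i]) :
  cre (\sum_(i : I) F i) = \sum_(i : I) cre (F i).
Proof. by elim/big_rec2: _ => // i x y _ <-; rewrite creD. Qed.
Lemma cim_sum (I : finType) (F : I -> R[i]) :
  cim (\sum_(i : I) F i) = \sum_(i : I) cim (F i).
Proof. by elim/big_rec2: _ => // i x y _ <-; rewrite cimD. Qed.

Lemma rcE r : rc r = (r%:C)%C. Proof. by []. Qed.
Lemma rcM r s : rc (r * s) = rc r * rc s. Proof. by rewrite !rcE rmorphM. Qed.
Lemma rcN r : rc (- r) = - rc r. Proof. by rewrite !rcE rmorphN. Qed.
Lemma rc_nat (m : nat) : rc (m%:R : R) = m%:R. Proof. by rewrite rcE rmorph_nat. Qed.
Lemma conjcM a b : conjc (a * b) = conjc a * conjc b. Proof. exact: rmorphM. Qed.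
Lemma rc_conj r : conjc (rc r) = rc r. Proof. by rewrite /rc /conjc oppr0. Qed.
Lemma inv2_rc : (2%:R : R[i])^-1 = rc 2%:R^-1.
Proof. by rewrite rcE fmorphV rmorph_nat. Qed.

Lemma complex_eq a b : cre a = cre b -> cim a = cim b -> a = b.
Proof. by case: a => ? ?; case: b => ? ? /= -> ->. Qed.

Lemma rc_creB_ciM z : rc (cre z) - ci * rc (cre (ci * z)) = z.
Proof.
apply: complex_eq; case: z => x y; rewrite /rc /ci /cre /cim /=; ring.
Qed.

End ComplexParts.

Section MatrixAlgebra.
Context {R : realType} {n : nat}.
Implicit Types (X Y Z J : 'M[R[i]]_n).

Lemma adjK : involutive (@adj R n).
Proof. by move=> X; apply/matrixP => a b; rewrite !mxE conjcK. Qed.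
Lemma adjD X Y : adj (X + Y) = adj X + adj Y.
Proof. by apply/matrixP => a b; rewrite !mxE rmorphD. Qed.
Lemma adjN X : adj (- X) = - adj X.
Proof. by apply/matrixP => a b; rewrite !mxE rmorphN. Qed.
Lemma adjB X Y : adj (X - Y) = adj X - adj Y.
Proof. by rewrite adjD adjN. Qed.
Lemma adj0 : adj (0 : 'M[R[i]]_n) = 0.
Proof. by apply/matrixP => a b; rewrite !mxE rmorph0. Qed.
Lemma adj1 : adj (1 : 'M[R[i]]_n) = 1.
Proof. by apply/matrixP => a b; rewrite !mxE eq_sym conjc_nat. Qed.
Lemma adjZ (c : R[i]) X : adj (c *: X) = conjc c *: adj X.
Proof. by apply/matrixP => a b; rewrite !mxE rmorphM. Qed.
Lemma adjM X Y : adj (X *m Y) = adj Y *m adj X.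
Proof.
apply/matrixP => a b; rewrite !mxE rmorph_sum; apply: eq_bigr => c _.
by rewrite !mxE rmorphM mulrC.
Qed.
Lemma adjX X k : adj (X ^+ k) = adj X ^+ k.
Proof.
elim: k => [|k IH]; first by rewrite !expr0 adj1.
by rewrite exprSr -mulmxE adjM IH mulmxE -exprS.
Qed.
Lemma mxtrace_adj X : \tr (adj X) = conjc (\tr X).
Proof. by rewrite /mxtrace rmorph_sum; apply: eq_bigr => a _; rewrite mxE. Qed.

Lemma ipDl X Y Z : ip (X + Y) Z = ip X Z + ip Y Z.
Proof. by rewrite /ip mulmxDl mxtraceD creD. Qed.
Lemma ipDr X Y Z : ip X (Y + Z) = ip X Y + ip X Z.
Proof. by rewrite /ip mulmxDr mxtraceD creD. Qed.
Lemma ipNl X Y : ip (- X) Y = - ip X Y.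
Proof. by rewrite /ip mulNmx raddfN creN. Qed.
Lemma ipNr X Y : ip X (- Y) = - ip X Y.
Proof. by rewrite /ip mulmxN raddfN creN. Qed.
Lemma ipBl X Y Z : ip (X - Y) Z = ip X Z - ip Y Z.
Proof. by rewrite ipDl ipNl. Qed.
Lemma ipBr X Y Z : ip X (Y - Z) = ip X Y - ip X Z.
Proof. by rewrite ipDr ipNr. Qed.
Lemma ip0l X : ip 0 X = 0.
Proof. by rewrite /ip mul0mx mxtrace0. Qed.
Lemma ipZl (r : R) X Y : ip (rc r *: X) Y = r * ip X Y.
Proof. by rewrite /ip -scalemxAl mxtraceZ cre_rcM. Qed.
Lemma ipZr (r : R) X Y : ip X (rc r *: Y) = r * ip X Y.
Proof. by rewrite /ip -scalemxAr mxtraceZ cre_rcM. Qed.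
Lemma ipC X Y : ip X Y = ip Y X.
Proof. by rewrite /ip mxtrace_mulC. Qed.
Lemma ip_adjl X Y : ip (adj X) Y = ip X (adj Y).
Proof. by rewrite /ip -[Y in LHS]adjK -adjM mxtrace_adj cre_conj mxtrace_mulC. Qed.
Lemma ip_mulmxl X Y Z : ip (X *m Y) Z = ip Y (Z *m X).
Proof. by rewrite /ip -mulmxA mxtrace_mulC -mulmxA. Qed.
Lemma ip_mulmxr X Y Z : ip (X *m Y) Z = ip X (Y *m Z).
Proof. by rewrite /ip mulmxA. Qed.

Lemma lieDl X Y Z : lie (X + Y) Z = lie X Z + lie Y Z.
Proof. by rewrite /lie mulmxDl mulmxDr opprD addrACA. Qed.
Lemma lieDr X Y Z : lie X (Y + Z) = lie X Y + lie X Z.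
Proof. by rewrite /lie mulmxDl mulmxDr opprD addrACA. Qed.
Lemma lieNl X Y : lie (- X) Y = - lie X Y.
Proof. by rewrite /lie mulNmx mulmxN opprB opprK addrC. Qed.
Lemma lieNr X Y : lie X (- Y) = - lie X Y.
Proof. by rewrite /lie mulNmx mulmxN opprB opprK addrC. Qed.
Lemma lieBl X Y Z : lie (X - Y) Z = lie X Z - lie Y Z.
Proof. by rewrite lieDl lieNl. Qed.
Lemma lieZl (c : R[i]) X Y : lie (c *: X) Y = c *: lie X Y.
Proof. by rewrite /lie scalerBr -scalemxAl -scalemxAr. Qed.
Lemma lieC X Y : lie X Y = - lie Y X.
Proof. by rewrite /lie opprB. Qed.
Lemma lieXl J k : lie (J ^+ k) J = 0.
Proof. by rewrite /lie !mulmxE -exprSr -exprS subrr. Qed.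
Lemma adj_lie X Y : adj (lie X Y) = lie (adj Y) (adj X).
Proof. by rewrite /lie adjB !adjM. Qed.
Lemma ip_lie X Y Z : ip (lie X Y) Z = ip X (lie Y Z).
Proof. by rewrite /lie ipBl ipBr ip_mulmxr ip_mulmxl. Qed.

Lemma pluspE X : plusp X = rc 2%:R^-1 *: (X - adj X).
Proof. by rewrite /plusp inv2_rc. Qed.
Lemma minuspE X : minusp X = rc 2%:R^-1 *: (X + adj X).
Proof. by rewrite /minusp inv2_rc. Qed.

Lemma scale_half_add X : rc 2%:R^-1 *: (X + X) = X.
Proof.
rewrite -[X + X]mulr2n -[X *+ 2]scaler_nat scalerA -rc_nat -rcM.
by rewrite mulVf ?pnatr_eq0 // rcE rmorph1 scale1r.
Qed.

Lemma ip_pluspl X Y : ip (plusp X) Y = ip X (plusp Y).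
Proof. by rewrite !pluspE ipZl ipZr ipBl ipBr ip_adjl. Qed.
Lemma ip_minuspl X Y : ip (minusp X) Y = ip X (minusp Y).
Proof. by rewrite !minuspE ipZl ipZr ipDl ipDr ip_adjl. Qed.

Lemma minuspD X Y : minusp (X + Y) = minusp X + minusp Y.
Proof. by rewrite !minuspE adjD -scalerDr addrACA. Qed.
Lemma plusp0 : plusp (0 : 'M[R[i]]_n) = 0.
Proof. by rewrite pluspE adj0 subr0 scaler0. Qed.

Lemma plusp_add_minusp X : plusp X + minusp X = X.
Proof. by rewrite pluspE minuspE -scalerDr addrACA addNr addr0 scale_half_add. Qed.
Lemma minusp_sub_plusp X : minusp X - plusp X = adj X.
Proof. by rewrite pluspE minuspE -scalerBr opprB addrC addrA subrK scale_half_add. Qed.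

Definition herm_mx X := adj X = X.
Definition skew_mx X := adj X = - X.

Lemma herm_mx_minusp X : herm_mx (minusp X).
Proof. by rewrite /herm_mx minuspE adjZ rc_conj adjD adjK addrC. Qed.
Lemma skew_mx_plusp X : skew_mx (plusp X).
Proof. by rewrite /skew_mx pluspE adjZ rc_conj adjB adjK -scalerN opprB. Qed.

Lemma minusp_id X : herm_mx X -> minusp X = X.
Proof. by rewrite /herm_mx minuspE => ->; rewrite scale_half_add. Qed.
Lemma plusp_id X : skew_mx X -> plusp X = X.
Proof. by rewrite /skew_mx pluspE => ->; rewrite opprK scale_half_add. Qed.

Lemma plusp_eq0 X : plusp X = 0 <-> herm_mx X.
Proof.
split=> [h|h]; last by rewrite pluspE h subrr scaler0.
by rewrite /herm_mx -minusp_sub_plusp -[X in RHS]plusp_add_minusp h subr0 add0r.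
Qed.
Lemma minusp_eq0 X : minusp X = 0 <-> skew_mx X.
Proof.
split=> [h|h]; last by rewrite minuspE h subrr scaler0.
by rewrite /skew_mx -minusp_sub_plusp -[X in RHS]plusp_add_minusp h addr0 sub0r.
Qed.

Lemma herm_mxX J k : herm_mx J -> herm_mx (J ^+ k).
Proof. by rewrite /herm_mx adjX => ->. Qed.

Lemma adjX_skew_mx J k : skew_mx J -> adj (J ^+ k) = (-1) ^+ k *: J ^+ k.
Proof.
rewrite /skew_mx adjX => ->; elim: k => [|k IH]; first by rewrite !expr0 scale1r.
by rewrite !exprS IH -!mulmxE -scalemxAr mulNmx scalerN -scaleNr mulN1r.
Qed.
Lemma skew_mxX_even J k :
  skew_mx J -> ~~ odd k -> herm_mx (J ^+ k).
Proof.
by move=> hJ ek; rewrite /herm_mx adjX_skew_mx // -signr_odd (negbTE ek) scale1r.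
Qed.
Lemma skew_mxX_odd J k : skew_mx J -> odd k -> skew_mx (J ^+ k).
Proof.
by move=> hJ ok; rewrite /skew_mx adjX_skew_mx // -signr_odd ok scaleN1r.
Qed.

Lemma conjc_Nci : conjc (- ci) = ci :> R[i].
Proof. by rewrite /ci /conjc /= oppr0 opprK. Qed.
Lemma skew_mx_NciZ X : herm_mx X -> skew_mx (- ci *: X).
Proof. by rewrite /skew_mx adjZ conjc_Nci => ->; rewrite scaleNr opprK. Qed.
Lemma herm_mx_NciZ X : skew_mx X -> herm_mx (- ci *: X).
Proof. by rewrite /herm_mx adjZ conjc_Nci => ->; rewrite scalerN scaleNr. Qed.

Lemma herm_mx_diag X j : herm_mx X -> rc (cre (X j j)) = X j j.
Proof.
move=> /(congr1 (fun M : 'M[R[i]]_n => M j j)); rewrite mxE.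
by case: (X j j) => x y /eqP; rewrite eq_complex /= => /andP [_ /eqP e]; congr Complex; lra.
Qed.
Lemma skew_mx_diag X j : skew_mx X -> cre (X j j) = 0.
Proof.
move=> /(congr1 (fun M : 'M[R[i]]_n => M j j)); rewrite !mxE.
by case: (X j j) => x y /eqP; rewrite eq_complex /= => /andP [/eqP e _]; rewrite /cre /=; lra.
Qed.

Lemma herm_or_skewX J k : herm_mx J \/ skew_mx J -> herm_mx (J ^+ k) \/ skew_mx (J ^+ k).
Proof.
case=> [hJ|sJ]; first by left; apply: herm_mxX.
by case: (boolP (odd k)) => ok; [right; apply: skew_mxX_odd | left; apply: skew_mxX_even].
Qed.

Lemma herm_or_skew_NciZ X : herm_mx X \/ skew_mx X -> herm_mx (- ci *: X) \/ skew_mx (- ci *: X).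
Proof. by case=> [/skew_mx_NciZ|/herm_mx_NciZ]; [right|left]. Qed.

End MatrixAlgebra.

Section LieParts.
Context {R : realType} {n : nat}.
Implicit Types (X Y : 'M[R[i]]_n).

Lemma lie_herm_skew X Y :
  herm_mx X -> skew_mx Y -> herm_mx (lie X Y).
Proof. by move=> hX hY; rewrite /herm_mx adj_lie hX hY lieNl -lieC. Qed.
Lemma lie_skew_herm X Y :
  skew_mx X -> herm_mx Y -> herm_mx (lie X Y).
Proof. by move=> hX hY; rewrite /herm_mx adj_lie hX hY lieNr -lieC. Qed.
Lemma lie_skew_skew X Y :
  skew_mx X -> skew_mx Y -> skew_mx (lie X Y).
Proof. by move=> hX hY; rewrite /skew_mx adj_lie hX hY lieNl lieNr opprK lieC. Qed.
Lemma lie_herm_herm X Y :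
  herm_mx X -> herm_mx Y -> skew_mx (lie X Y).
Proof. by move=> hX hY; rewrite /skew_mx adj_lie hX hY lieC. Qed.

Lemma minusp_lie X Y :
  minusp (lie X Y) = lie (plusp X) (minusp Y) + lie (minusp X) (plusp Y).
Proof.
(* Rewriting in a goal with several [plusp]/[minusp]/[lie] subterms compares
   them up to conversion, which unfolds the matrices entrywise; here and below
   the structured matrices are generalized before any heavy rewriting. *)
rewrite -{1}(plusp_add_minusp X) -{1}(plusp_add_minusp Y).
have := (skew_mx_plusp X, skew_mx_plusp Y, herm_mx_minusp X, herm_mx_minusp Y).
move: (plusp X) (plusp Y) (minusp X) (minusp Y) => Xp Yp Xm Ym [[[sX sY] hX] hY].
rewrite !lieDl !lieDr 3!minuspD.
have -> : minusp (lie Xp Yp) = 0 by apply/minusp_eq0/lie_skew_skew.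
have -> : minusp (lie Xm Ym) = 0 by apply/minusp_eq0/lie_herm_herm.
rewrite (minusp_id _ (lie_skew_herm _ _ sX hY)) (minusp_id _ (lie_herm_skew _ _ hX sY)).
by rewrite add0r addr0.
Qed.
End LieParts.

Lemma coth_opp {R : realType} (x : R) : coth (- x) = - coth x.
Proof. by rewrite /coth opprK addrC -opprB invrN mulrN. Qed.

Section RMatrix.
Context {R : realType} {n : nat} (q : 'I_n -> R).
Implicit Types (X Y J D : 'M[R[i]]_n).

Lemma RqD X Y : Rq q (X + Y) = Rq q X + Rq q Y.
Proof. by apply/matrixP => a b; rewrite !mxE; case: eqP; rewrite ?addr0 ?mulrDl. Qed.
Lemma RqZ (c : R[i]) X : Rq q (c *: X) = c *: Rq q X.
Proof. by apply/matrixP => a b; rewrite !mxE; case: eqP; rewrite ?mulr0 ?mulrA. Qed.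
Lemma Rq0 : Rq q 0 = 0.
Proof. by apply/matrixP => a b; rewrite !mxE; case: eqP; rewrite ?mul0r. Qed.

Lemma rc_coth_sym a b : rc (coth (q b - q a)) = - rc (coth (q a - q b)).
Proof. by rewrite -opprB coth_opp rcN. Qed.

Lemma adj_Rq X : adj (Rq q X) = - Rq q (adj X).
Proof.
apply/matrixP => a b; rewrite !mxE eq_sym; case: eqP => _; first by rewrite rmorph0 oppr0.
by rewrite conjcM rc_conj rc_coth_sym mulrN.
Qed.
Lemma plusp_Rq X : plusp (Rq q X) = Rq q (minusp X).
Proof. by rewrite pluspE minuspE adj_Rq opprK RqZ RqD. Qed.

Lemma ip_Rql X Y : ip (Rq q X) Y = - ip X (Rq q Y).
Proof.
rewrite /ip -creN /mxtrace -sumrN; congr cre; apply: eq_bigr => a _.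
rewrite !mxE -sumrN; apply: eq_bigr => b _; rewrite !mxE eq_sym.
case: eqP => _; first by rewrite mul0r mulr0 oppr0.
by rewrite rc_coth_sym mulrN mulNr -mulrA [Y b a * _]mulrC.
Qed.

Lemma adj_lie_Rq Y J : adj (lie (Rq q Y) J) = lie (Rq q (adj Y)) (adj J).
Proof. by rewrite adj_lie adj_Rq lieNr -lieC. Qed.

Lemma diag0_minusp Y : diag0 (minusp Y) = diagq (fun j => cre (Y j j)).
Proof.
apply/matrixP => a b; rewrite !mxE; case: eqP => [->|//].
by rewrite /cre rcE ReJ_add mulrC.
Qed.

Lemma ip_Rq_plusp_lie D Y J :
  ip (Rq q (plusp (lie D J))) (minusp Y) = ip D (lie (Rq q (minusp Y)) J).
Proof.
rewrite ip_Rql ip_pluspl plusp_Rq (minusp_id _ (herm_mx_minusp Y)).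
by rewrite ip_lie lieC ipNr opprK.
Qed.

Lemma herm_lie_Rq Y J : herm_mx Y -> herm_mx J -> herm_mx (lie (Rq q Y) J).
Proof. by move=> hY hJ; rewrite /herm_mx adj_lie_Rq hY hJ. Qed.
Lemma skew_lie_Rq Y J : herm_mx Y -> skew_mx J -> skew_mx (lie (Rq q Y) J).
Proof. by move=> hY sJ; rewrite /skew_mx adj_lie_Rq hY sJ lieNr. Qed.

Definition ham_field Y J : 'M[R[i]]_n :=
  (2%:R)^-1 *: lie (Rq q (Y + adj Y) + (adj Y - Y)) J.

Lemma ip_ham_field D Y J : lie Y J = 0 ->
  ip D (ham_field Y J)
  = ip D (lie (Rq q (minusp Y)) J) + 2%:R^-1 * ip D (lie (adj Y) J).
Proof.
move=> YJ; rewrite /ham_field inv2_rc -lieZl scalerDr -RqZ -minuspE lieDl ipDr.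
by rewrite lieZl lieBl YJ subr0 ipZr.
Qed.

Lemma ham_field_herm Y J : herm_mx Y -> ham_field Y J = lie (Rq q Y) J.
Proof.
by move=> hY; rewrite /ham_field hY subrr addr0 inv2_rc -lieZl -RqZ scale_half_add.
Qed.

Lemma ham_field_skew Y J : skew_mx Y -> lie Y J = 0 -> ham_field Y J = 0.
Proof.
move=> sY YJ; rewrite /ham_field sY subrr Rq0 add0r lieBl lieNl YJ oppr0.
by rewrite addr0 scaler0.
Qed.

Lemma ham_field_NciZ X J :
  (2%:R)^-1 *: lie (ci *: Rq q (adj X - X) + ci *: (X + adj X)) J
  = ham_field (- ci *: X) J.
Proof.
rewrite /ham_field adjZ conjc_Nci; congr (_ *: lie _ J); congr (_ + _).
  by rewrite -RqZ scalerBr scaleNr addrC.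
by rewrite scaleNr opprK scalerDr addrC.
Qed.

Lemma ham_field_herm_or_skew Y J : lie Y J = 0 -> herm_mx Y \/ skew_mx Y ->
  (herm_mx J -> herm_mx (ham_field Y J)) /\ (skew_mx J -> skew_mx (ham_field Y J)).
Proof.
move=> YJ [hY|sY].
  by rewrite ham_field_herm //; split; [apply: herm_lie_Rq | apply: skew_lie_Rq].
by rewrite ham_field_skew // /herm_mx /skew_mx adj0 oppr0.
Qed.

End RMatrix.

Section CommutingGradient.
Context {R : realType} {n : nat}.
Implicit Types (D P J : 'M[R[i]]_n).

Lemma diag0D (X Y : 'M[R[i]]_n) : diag0 (X + Y) = diag0 X + diag0 Y.
Proof. by apply/matrixP => a b; rewrite !mxE; case: eqP; rewrite ?addr0. Qed.

Lemma minusp0 : minusp (0 : 'M[R[i]]_n) = 0.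
Proof. by apply/minusp_eq0; rewrite /skew_mx adj0 oppr0. Qed.

Lemma lie_plusp_minusp_commuting P J :
  lie P J = 0 -> lie (plusp P) (minusp J) = - lie (minusp P) (plusp J).
Proof.
move=> PJ; have := minusp_lie P J; rewrite PJ minusp0.
by move/eqP; rewrite eq_sym addr_eq0 => /eqP.
Qed.

Lemma half_lie_adj_commuting P J : lie P J = 0 ->
  rc 2%:R^-1 *: lie (adj P) J = lie (minusp P) (plusp J) - lie (plusp P) (plusp J).
Proof.
move=> PJ; rewrite -[lie (adj P) J]subr0 -PJ -[lie (adj P) J - _]lieBl -lieZl.
have -> : rc 2%:R^-1 *: (adj P - P) = - plusp P by rewrite pluspE -scalerN opprB.
rewrite -{1}(plusp_add_minusp J) lieNl lieDr lie_plusp_minusp_commuting //.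
by rewrite opprD opprK addrC.
Qed.

Lemma ip_plusp_lie_commuting D P J : lie P J = 0 ->
  ip (plusp J) (lie (minusp D) (minusp P) - lie (plusp D) (plusp P))
  = 2%:R^-1 * ip D (lie (adj P) J).
Proof.
move=> PJ.
transitivity (ip D (lie (minusp P) (plusp J) - lie (plusp P) (plusp J))); last first.
  by rewrite -ipZr -half_lie_adj_commuting.
have := (herm_mx_minusp P, skew_mx_plusp P, skew_mx_plusp J).
move: (minusp P) (plusp P) (plusp J) => Pm Pp Jp [[hPm sPp] sJp].
have eDm : ip (minusp D) (lie Pm Jp) = ip D (lie Pm Jp).
  by rewrite ip_minuspl minusp_id //; apply: lie_herm_skew.
have eDp : ip (plusp D) (lie Pp Jp) = ip D (lie Pp Jp).
  by rewrite ip_pluspl plusp_id //; apply: lie_skew_skew.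
move: (minusp D) (plusp D) eDm eDp => Dm Dp eDm eDp.
by rewrite ipBr (ipC Jp) (ipC Jp) !ip_lie eDm eDp ipBr.
Qed.

Lemma ip_parts_mulmx_lie D Y J :
  ip (minusp (J *m D)) (minusp Y) + ip (plusp (D *m J)) (plusp Y)
  - ip (minusp (D *m J)) (minusp Y) - ip (plusp (J *m D)) (plusp Y)
  = ip D (lie (adj Y) J).
Proof.
have mm X : ip (minusp X) (minusp Y) = ip X (minusp Y).
  by rewrite ip_minuspl (minusp_id _ (herm_mx_minusp Y)).
have pp X : ip (plusp X) (plusp Y) = ip X (plusp Y).
  by rewrite ip_pluspl (plusp_id _ (skew_mx_plusp Y)).
rewrite !mm !pp -minusp_sub_plusp.
move: (minusp Y) (plusp Y) => Ym Yp.
rewrite !(ip_mulmxl J D) !(ip_mulmxr D J) /lie mulmxBl mulmxBr !ipBr.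
move: (ip D (Ym *m J)) (ip D (J *m Yp)) (ip D (J *m Ym)) (ip D (Yp *m J)).
by move=> a b c d; lra.
Qed.

End CommutingGradient.

Section HamiltonianFlow.
Context {R : realType} {n : nat}.
Implicit Types (f h : fn R n) (Y : ('I_n -> R) -> 'M[R[i]]_n -> 'M[R[i]]_n).

Definition diag_re Y : vfq R n := fun q J j => cre (Y q J j j).
Definition ham_flow Y : vfJ R n := fun q J => ham_field q (Y q J) J.

Lemma vf_apply_ham_flow Y f q J :
  vf_apply (diag_re Y) (ham_flow Y) f q J
  = ip (nabla1 f q J) (diag0 (minusp (Y q J))) + ip (d2 f q J) (ham_field q (Y q J) J).
Proof. by rewrite /vf_apply diag0_minusp. Qed.

Lemma br1_commuting f h Y q J :
  nabla1 h q J = 0 -> d2 h q J = Y q J -> lie (Y q J) J = 0 ->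
  br1 f h q J = vf_apply (diag_re Y) (ham_flow Y) f q J.
Proof.
move=> Nh Dh YJ; rewrite vf_apply_ham_flow (ip_ham_field _ _ _ _ YJ) /br1; cbv zeta.
rewrite Nh Dh; move: (nabla1 f q J) (d2 f q J) (Y q J) YJ => N D P PJ.
have t1 : ip (Rq q (plusp (lie P J))) (minusp D) = 0 by rewrite PJ plusp0 Rq0 ip0l.
rewrite t1 ip_Rq_plusp_lie ip_plusp_lie_commuting // ip0l !subr0.
by rewrite addrA.
Qed.

Lemma br2_commuting f h Y q J :
  nabla1 h q J = 0 -> nabla2 h q J = Y q J -> nabla2' h q J = Y q J ->
  br2 f h q J = vf_apply (diag_re Y) (ham_flow Y) f q J.
Proof.
move=> Nh JP PJ.
have YJ : lie (Y q J) J = 0.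
  by move: JP PJ; rewrite /lie /nabla2 /nabla2' => <- e; rewrite -{2}e mulmxA subrr.
have hP : lie (d2 h q J) J = 0.
  by move: JP PJ; rewrite /lie /nabla2 /nabla2' => -> ->; rewrite subrr.
rewrite vf_apply_ham_flow (ip_ham_field _ _ _ _ YJ).
have sum_shape (x1 x2 x3 x4 x5 x6 x7 x8 a b c : R) :
    x1 = a + a -> x2 = 0 -> x3 = b + b -> x4 = 0 -> x5 + x6 - x7 - x8 = c ->
    2%:R^-1 * (x1 - x2 + x3 - x4 + x5 + x6 - x7 - x8) = a + (b + 2%:R^-1 * c).
  by move=> -> -> -> -> <-; lra.
apply: sum_shape.
- by rewrite JP PJ minuspD diag0D ipDr.
- by rewrite Nh ip0l.
- by rewrite JP PJ minuspD ipDr ip_Rq_plusp_lie.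
- by rewrite hP plusp0 Rq0 ip0l.
- by rewrite JP PJ; apply: ip_parts_mulmx_lie.
Qed.

End HamiltonianFlow.

Section MatrixDerivative.
Context {R : realType} {n : nat}.
Implicit Types (F G : R -> 'M[R[i]]_n) (J X Z : 'M[R[i]]_n).

Lemma is_derive_affine (a b x : R) : is_derive x 1 (fun t => a + t * b) b.
Proof.
have -> : (fun t => a + t * b) = cst a + b \*: id by apply/funext => t /=; rewrite mulrC.
apply: is_derive_eq (is_deriveD (is_derive_cst a x 1) (is_deriveZ b (is_derive_id x 1))) _.
by rewrite add0r /GRing.scale /= mulr1.
Qed.

Definition is_derive_mx F (D : 'M[R[i]]_n) :=
  forall a b, is_derive (0 : R) 1 (fun t => cre (F t a b)) (cre (D a b)) /\
              is_derive (0 : R) 1 (fun t => cim (F t a b)) (cim (D a b)).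

Lemma is_derive_mx_cst X : is_derive_mx (fun _ => X) 0.
Proof. by move=> a b; rewrite mxE; split; apply: is_derive_cst. Qed.

Lemma is_derive_mx_line J X : is_derive_mx (fun t => J + rc t *: X) X.
Proof.
move=> a b; split.
  have -> : (fun t => cre ((J + rc t *: X) a b)) = fun t => cre (J a b) + t * cre (X a b).
    by apply/funext => t; rewrite !mxE creD cre_rcM.
  exact: is_derive_affine.
have -> : (fun t => cim ((J + rc t *: X) a b)) = fun t => cim (J a b) + t * cim (X a b).
  by apply/funext => t; rewrite !mxE cimD cim_rcM.
exact: is_derive_affine.
Qed.

Lemma is_derive_mx_mul {F G DF DG} : is_derive_mx F DF -> is_derive_mx G DG ->
  is_derive_mx (fun t => F t *m G t) (DF *m G 0 + F 0 *m DG).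
Proof.
move=> hF hG a b.
pose fr c := fun t : R => cre (F t a c); pose fi c := fun t : R => cim (F t a c).
pose gr c := fun t : R => cre (G t c b); pose gi c := fun t : R => cim (G t c b).
have dre c : is_derive (0:R) 1 (fr c * gr c - fi c * gi c)
   (fr c 0 *: cre (DG c b) + gr c 0 *: cre (DF a c)
    - (fi c 0 *: cim (DG c b) + gi c 0 *: cim (DF a c))).
  by apply: is_deriveB; apply: is_deriveM; [exact: (hF a c).1 | exact: (hG c b).1
    | exact: (hF a c).2 | exact: (hG c b).2].
have dim c : is_derive (0:R) 1 (fr c * gi c + fi c * gr c)
   (fr c 0 *: cim (DG c b) + gi c 0 *: cre (DF a c)
    + (fi c 0 *: cre (DG c b) + gr c 0 *: cim (DF a c))).
  by apply: is_deriveD; apply: is_deriveM; [exact: (hF a c).1 | exact: (hG c b).2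
    | exact: (hF a c).2 | exact: (hG c b).1].
have Hre := is_derive_sum dre; have Him := is_derive_sum dim.
have -> : (DF *m G 0 + F 0 *m DG) a b = (DF *m G 0) a b + (F 0 *m DG) a b.
  by rewrite mxE.
split.
  have -> : (fun t => cre ((F t *m G t) a b)) = \sum_c (fr c * gr c - fi c * gi c).
    by apply/funext => t; rewrite mxE cre_sum /= fct_sumE; apply: eq_bigr => c _; rewrite creM.
  apply: is_derive_eq Hre _.
  rewrite creD !mxE !cre_sum -big_split; apply: eq_bigr => c _ /=.
  rewrite !creM /fr /fi /gr /gi /GRing.scale /=; ring.
have -> : (fun t => cim ((F t *m G t) a b)) = \sum_c (fr c * gi c + fi c * gr c).
  by apply/funext => t; rewrite mxE cim_sum /= fct_sumE; apply: eq_bigr => c _; rewrite cimM.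
apply: is_derive_eq Him _.
rewrite cimD !mxE !cim_sum -big_split; apply: eq_bigr => c _ /=.
rewrite !cimM /fr /fi /gr /gi /GRing.scale /=; ring.
Qed.

Fixpoint pow_deriv J X k : 'M[R[i]]_n :=
  if k is k'.+1 then pow_deriv J X k' *m J + J ^+ k' *m X else 0.

Lemma is_derive_mx_exp J X k :
  is_derive_mx (fun t => (J + rc t *: X) ^+ k) (pow_deriv J X k).
Proof.
elim: k => [|k IH]; first exact: is_derive_mx_cst.
have e0 : J + rc 0 *: X = J by rewrite rcE rmorph0 scale0r addr0.
suff -> : (fun t => (J + rc t *: X) ^+ k.+1)
    = fun t => (J + rc t *: X) ^+ k *m (J + rc t *: X).
  by have := is_derive_mx_mul IH (is_derive_mx_line J X); rewrite /= e0.
by apply/funext => t; rewrite exprSr mulmxE.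
Qed.

Lemma is_derive_mxtrace {F D} : is_derive_mx F D ->
  is_derive (0 : R) 1 (fun t => cre (\tr (F t))) (cre (\tr D)) /\
  is_derive (0 : R) 1 (fun t => cim (\tr (F t))) (cim (\tr D)).
Proof.
move=> dF; split.
  have -> : (fun t => cre (\tr (F t))) = \sum_a (fun t => cre (F t a a)).
    by apply/funext => t; rewrite fct_sumE /mxtrace cre_sum.
  by rewrite /mxtrace cre_sum; apply: is_derive_sum => a; case: (dF a a).
have -> : (fun t => cim (\tr (F t))) = \sum_a (fun t => cim (F t a a)).
  by apply/funext => t; rewrite fct_sumE /mxtrace cim_sum.
by rewrite /mxtrace cim_sum; apply: is_derive_sum => a; case: (dF a a).
Qed.

Lemma mxtrace_pow_deriv J X k Z : J *m Z = Z *m J ->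
  \tr (pow_deriv J X k.+1 *m Z) = k.+1%:R * \tr (J ^+ k *m X *m Z).
Proof.
elim: k Z => [|k IH] Z JZ; first by rewrite /= mul0mx add0r mul1r.
rewrite [pow_deriv J X k.+2]/= mulmxDl mxtraceD -mulmxA IH; last first.
  by rewrite -mulmxA -JZ !mulmxA.
have -> : \tr (J ^+ k *m X *m (J *m Z)) = \tr (J ^+ k.+1 *m X *m Z).
  by rewrite JZ mulmxA mxtrace_mulC !mulmxA mulmxE -exprS.
by rewrite [k.+2%:R](mulrSr 1 k.+1) mulrDl mul1r.
Qed.

End MatrixDerivative.

Section Gradients.
Context {R : realType} {n : nat}.
Implicit Types (h : fn R n) (q : 'I_n -> R) (J P X : 'M[R[i]]_n).

Lemma mxtrace_mul_delta P (a b : 'I_n) : \tr (P *m delta_mx b a) = P a b.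
Proof.
rewrite /mxtrace (bigD1 a) //= big1 ?addr0 => [|i ia].
  rewrite !mxE (bigD1 b) //= big1 ?addr0 => [|j jb]; first by rewrite mxE !eqxx mulr1.
  by rewrite mxE (negbTE jb) mulr0.
by rewrite mxE big1 // => j _; rewrite mxE (negbTE ia) andbF mulr0.
Qed.

Lemma d2_ip h q J P : (forall X, dir2 h q J X = ip P X) -> d2 h q J = P.
Proof.
move=> hP; apply/matrixP => a b; rewrite mxE !hP /ip -scalemxAr mxtraceZ.
by rewrite !mxtrace_mul_delta rc_creB_ciM.
Qed.

Lemma nabla1_q_indep h q J : (forall q q', h q J = h q' J) -> nabla1 h q J = 0.
Proof.
move=> hq; apply/matrixP => a b; rewrite !mxE; case: eqP => // _.
rewrite /dirD (_ : line h q J _ = fun _ => h q J) ?derive1_cst ?rcE ?rmorph0 //.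
by apply/funext => t; rewrite /line /= scaler0 addr0 (hq _ q).
Qed.

Lemma dir2_hk m q J X : dir2 (hk m.+1) q J X = ip (J ^+ m) X.
Proof.
have [dre _] := is_derive_mxtrace (is_derive_mx_exp J X m.+1).
have dh : is_derive (0 : R) 1 (line (hk m.+1) q J ((fun _ => 0), X))
    (m.+1%:R^-1 * cre (\tr (pow_deriv J X m.+1))) := is_deriveZ _ dre.
rewrite /dir2 /dirD derive1E derive_val -(mulmx1 (pow_deriv _ _ _)).
rewrite mxtrace_pow_deriv ?mulmx1 ?mul1mx // -rc_nat cre_rcM.
by rewrite mulrA mulVf ?mul1r ?pnatr_eq0.
Qed.

Lemma dir2_htk m q J X : dir2 (htk m.+1) q J X = ip (- ci *: J ^+ m) X.
Proof.
have [_ dim] := is_derive_mxtrace (is_derive_mx_exp J X m.+1).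
have dh : is_derive (0 : R) 1 (line (htk m.+1) q J ((fun _ => 0), X))
    (m.+1%:R^-1 * cim (\tr (pow_deriv J X m.+1))) := is_deriveZ _ dim.
rewrite /dir2 /dirD derive1E derive_val -(mulmx1 (pow_deriv _ _ _)).
rewrite mxtrace_pow_deriv ?mulmx1 ?mul1mx // -rc_nat cim_rcM.
rewrite mulrA mulVf ?mul1r ?pnatr_eq0 // /ip -scalemxAl mxtraceZ.
by rewrite mulNr creN cre_ciM opprK.
Qed.

Lemma nabla1_hk k q J : nabla1 (hk k) q J = 0.
Proof. exact: nabla1_q_indep. Qed.
Lemma nabla1_htk k q J : nabla1 (htk k) q J = 0.
Proof. exact: nabla1_q_indep. Qed.

Lemma d2_hk m q J : d2 (hk m.+1) q J = J ^+ m.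
Proof. by apply: d2_ip => X; rewrite dir2_hk. Qed.
Lemma d2_htk m q J : d2 (htk m.+1) q J = - ci *: J ^+ m.
Proof. by apply: d2_ip => X; rewrite dir2_htk. Qed.

End Gradients.

Lemma norm_lt_re_im {R : realType} {w : R[i]} {d : R} :
  `|w| < rc d -> `|cre w| < d /\ `|cim w| < d.
Proof.
rewrite normc_def /rc ltcE /= => /andP [_ lt_wd].
have ge0_sum : 0 <= cre w ^+ 2 + cim w ^+ 2 by rewrite addr_ge0 ?sqr_ge0.
split; apply: le_lt_trans lt_wd; rewrite -sqrtr_sqr ler_sqrt //.
  by rewrite lerDl sqr_ge0.
by rewrite lerDr sqr_ge0.
Qed.

Section AffineCoordinates.
Context {R : realType} {n : nat}.
Implicit Types (a x y : 'I_n) (z : R[i]) (q : 'I_n -> R) (J : 'M[R[i]]_n).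

(* With [z = 1] and [z = ci] these test functions read off the real and
   imaginary parts of J_xy. *)
Definition affine_coord a x y (c0 c1 : R) z : fn R n :=
  fun q J => c0 + c1 * q a + cre (z * J x y).

Lemma is_derive_line_affine_coord a x y c0 c1 z q J (v : ('I_n -> R) * 'M[R[i]]_n) :
  is_derive (0 : R) 1 (line (affine_coord a x y c0 c1 z) q J v)
    (c1 * v.1 a + cre (z * v.2 x y)).
Proof.
have -> : line (affine_coord a x y c0 c1 z) q J v
    = fun t => affine_coord a x y c0 c1 z q J + t * (c1 * v.1 a + cre (z * v.2 x y)).
  apply/funext => t; rewrite /line /affine_coord !mxE !mulrDr creD.
  by rewrite [z * (_ * _)]mulrCA cre_rcM; ring.
exact: is_derive_affine.
Qed.

Lemma dirD_affine_coord a x y c0 c1 z q J (v : ('I_n -> R) * 'M[R[i]]_n) :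
  dirD v (affine_coord a x y c0 c1 z) q J = c1 * v.1 a + cre (z * v.2 x y).
Proof.
have := is_derive_line_affine_coord a x y c0 c1 z q J v.
by rewrite /dirD derive1E => ?; rewrite derive_val.
Qed.

Lemma iterD_affine_coord a x y (vs : seq (('I_n -> R) * 'M[R[i]]_n)) c0 c1 z :
  exists c0' c1' z', iterD vs (affine_coord a x y c0 c1 z) = affine_coord a x y c0' c1' z'.
Proof.
elim: vs => [|v vs [c0' [c1' [z' IH]]]]; first by exists c0, c1, z.
exists (c1' * v.1 a + cre (z' * v.2 x y)), 0, 0.
apply/funext => q; apply/funext => J /=.
by rewrite IH dirD_affine_coord /affine_coord !mul0r addr0 /cre /= addr0.
Qed.

Lemma cont_at_affine_coord a x y c0 c1 z q J : cont_at (affine_coord a x y c0 c1 z) q J.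
Proof.
move=> e e_gt0; set K := `|c1| + `|cre z| + `|cim z|.
have K_ge0 : 0 <= K by rewrite /K !addr_ge0.
exists (e / (K + 1)); first by rewrite divr_gt0 // ltr_wpDl.
move=> q' J' near_q near_J; set d := e / (K + 1) in near_q near_J *.
have [near_re near_im] := norm_lt_re_im (near_J x y).
have -> : affine_coord a x y c0 c1 z q' J' - affine_coord a x y c0 c1 z q J
    = c1 * (q' a - q a) + (cre z * cre (J' x y - J x y) - cim z * cim (J' x y - J x y)).
  by rewrite /affine_coord -creM mulrBr mulrBr creB; ring.
apply: (@le_lt_trans _ _ (K * d)).
  apply: le_trans (ler_normD _ _) _; apply: le_trans (lerD (lexx _) (ler_normB _ _)) _.
  rewrite !normrM /K !mulrDl addrA.
  by rewrite !lerD // ler_wpM2l // ltW.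
rewrite /d mulrA ltr_pdivrMr ?ltr_wpDl // mulrC ltr_pM2l //.
by rewrite ltrDl.
Qed.

Lemma smooth_affine_coord a x y c0 c1 z : smooth (affine_coord a x y c0 c1 z).
Proof.
move=> vs q J _; have [c0' [c1' [z' ->]]] := iterD_affine_coord a x y vs c0 c1 z.
split; first exact: cont_at_affine_coord.
by move=> v; apply: ex_derive; apply: is_derive_line_affine_coord.
Qed.

Lemma nabla1_affine_coord a x y c0 c1 z q J :
  nabla1 (affine_coord a x y c0 c1 z) q J = diagq (fun j => c1 * (a == j)%:R).
Proof.
apply/matrixP => u v; rewrite !mxE; case: eqP => // _.
by rewrite dirD_affine_coord /= mxE mulr0 addr0.
Qed.

Lemma d2_affine_coord a x y c0 c1 z q J :
  d2 (affine_coord a x y c0 c1 z) q J = z *: delta_mx y x.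
Proof.
apply: d2_ip => X; rewrite /dir2 dirD_affine_coord /= mulr0 add0r.
by rewrite /ip -scalemxAl mxtraceZ mxtrace_mulC mxtrace_mul_delta.
Qed.

End AffineCoordinates.

Section VectorFields.
Context {R : realType} {n : nat}.
Implicit Types (EQ FQ : vfq R n) (EJ FJ : vfJ R n) (q : 'I_n -> R) (J : 'M[R[i]]_n).

Lemma ip_diagq (u w : 'I_n -> R) : ip (diagq u) (diagq w) = \sum_j u j * w j.
Proof.
rewrite /ip /mxtrace cre_sum; apply: eq_bigr => j _.
rewrite mxE (bigD1 j) //= big1 ?addr0 => [|k kj]; first by rewrite !mxE eqxx -rcM.
by rewrite !mxE eq_sym (negbTE kj) mul0r.
Qed.

Lemma vf_apply_affine_coord EQ EJ (a x y : 'I_n) (c1 : R) (z : R[i]) q J :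
  vf_apply EQ EJ (affine_coord a x y 0 c1 z) q J = c1 * EQ q J a + cre (z * EJ q J x y).
Proof.
rewrite /vf_apply nabla1_affine_coord d2_affine_coord ip_diagq.
rewrite /ip -scalemxAl mxtraceZ mxtrace_mulC mxtrace_mul_delta; congr (_ + _).
rewrite (bigD1 a) //= big1 ?addr0 => [|j ja]; first by rewrite eqxx mulr1.
by rewrite eq_sym (negbTE ja) mulr0 mul0r.
Qed.

Lemma vf_components_eq EQ EJ FQ FJ q J :
  (forall f, smooth f -> vf_apply EQ EJ f q J = vf_apply FQ FJ f q J) ->
  (forall j, EQ q J j = FQ q J j) /\ EJ q J = FJ q J.
Proof.
move=> eq_vf; split=> [j|].
  have := eq_vf _ (smooth_affine_coord j j j 0 1 0).
  by rewrite !vf_apply_affine_coord !mul0r /cre /= !addr0 !mul1r.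
apply/matrixP => x y; apply: complex_eq.
  have := eq_vf _ (smooth_affine_coord x x y 0 0 1).
  by rewrite !vf_apply_affine_coord !mul0r !add0r !mul1r.
have := eq_vf _ (smooth_affine_coord x x y 0 0 ci).
by rewrite !vf_apply_affine_coord !mul0r !add0r !cre_ciM => /oppr_inj.
Qed.

Lemma IsHam_agree br h FQ FJ :
  (forall f, smooth f -> forall q J, reg q -> br f h q J = vf_apply FQ FJ f q J) ->
  forall EQ EJ, IsHam br h EQ EJ <-> agree EQ EJ FQ FJ.
Proof.
move=> br_vf EQ EJ; split=> [ham q J reg_q | agr f smooth_f q J reg_q].
  by apply: vf_components_eq => f smooth_f; rewrite ham // br_vf.
have [eQ eJ] := agr q J reg_q; rewrite br_vf // /vf_apply eJ.
by congr (ip _ (diagq _) + _); apply/funext => j; apply: eQ.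
Qed.

End VectorFields.

Section HamiltonianFields.
Context {R : realType} {n : nat}.
Implicit Types (EQ : vfq R n) (EJ : vfJ R n) (q : 'I_n -> R) (J : 'M[R[i]]_n).

Lemma IsHam_hk {k} : (0 < k)%N ->
  (forall EQ EJ, IsHam2 (hk k) EQ EJ <-> agree EQ EJ
    (diag_re (fun _ J => J ^+ k)) (ham_flow (fun _ J => J ^+ k))) /\
  (forall EQ EJ, IsHam1 (hk k.+1) EQ EJ <-> agree EQ EJ
    (diag_re (fun _ J => J ^+ k)) (ham_flow (fun _ J => J ^+ k))).
Proof.
case: k => // m _; split; apply: IsHam_agree => f _ q J _.
  apply: br2_commuting; first exact: nabla1_hk.
    by rewrite /nabla2 d2_hk mulmxE -exprS.
  by rewrite /nabla2' d2_hk mulmxE -exprSr.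
by apply: br1_commuting; [exact: nabla1_hk | exact: d2_hk | exact: lieXl].
Qed.

Lemma IsHam_htk {k} : (0 < k)%N ->
  (forall EQ EJ, IsHam2 (htk k) EQ EJ <-> agree EQ EJ
    (diag_re (fun _ J => - ci *: J ^+ k)) (ham_flow (fun _ J => - ci *: J ^+ k))) /\
  (forall EQ EJ, IsHam1 (htk k.+1) EQ EJ <-> agree EQ EJ
    (diag_re (fun _ J => - ci *: J ^+ k)) (ham_flow (fun _ J => - ci *: J ^+ k))).
Proof.
case: k => // m _; split; apply: IsHam_agree => f _ q J _.
  apply: br2_commuting; first exact: nabla1_htk.
    by rewrite /nabla2 d2_htk -scalemxAr mulmxE -exprS.
  by rewrite /nabla2' d2_htk -scalemxAl mulmxE -exprSr.
apply: br1_commuting; [exact: nabla1_htk | exact: d2_htk |].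
by rewrite lieZl lieXl scaler0.
Qed.

Lemma agree_hk {k EQ EJ} : (0 < k)%N ->
  IsHam2 (hk k) EQ EJ \/ IsHam1 (hk k.+1) EQ EJ ->
  agree EQ EJ (diag_re (fun _ J => J ^+ k)) (ham_flow (fun _ J => J ^+ k)).
Proof. by move=> k_gt0 [H|H]; [apply/(IsHam_hk k_gt0).1 | apply/(IsHam_hk k_gt0).2]. Qed.

Lemma agree_htk {k EQ EJ} : (0 < k)%N ->
  IsHam2 (htk k) EQ EJ \/ IsHam1 (htk k.+1) EQ EJ ->
  agree EQ EJ (diag_re (fun _ J => - ci *: J ^+ k)) (ham_flow (fun _ J => - ci *: J ^+ k)).
Proof. by move=> k_gt0 [H|H]; [apply/(IsHam_htk k_gt0).1 | apply/(IsHam_htk k_gt0).2]. Qed.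

Lemma agree_vanish {Y : ('I_n -> R) -> 'M[R[i]]_n -> 'M[R[i]]_n} {EQ EJ q J} :
  agree EQ EJ (diag_re Y) (ham_flow Y) -> reg q ->
  skew_mx (Y q J) -> lie (Y q J) J = 0 -> (forall j, EQ q J j = 0) /\ EJ q J = 0.
Proof.
move=> agr reg_q sY YJ; have [eQ eJ] := agr q J reg_q.
by split=> [j|]; rewrite ?eQ ?eJ; [apply: skew_mx_diag | apply: ham_field_skew].
Qed.

Lemma hamiltonian_fields_tangent k : (0 < k)%N -> forall EQ EJ,
  [\/ IsHam2 (hk k) EQ EJ, IsHam1 (hk k.+1) EQ EJ,
      IsHam2 (htk k) EQ EJ | IsHam1 (htk k.+1) EQ EJ] ->
  forall q J, reg q ->
    (plusp J = 0 -> plusp (EJ q J) = 0) /\ (minusp J = 0 -> minusp (EJ q J) = 0).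
Proof.
move=> k_gt0 EQ EJ H q J reg_q.
have {}H : (IsHam2 (hk k) EQ EJ \/ IsHam1 (hk k.+1) EQ EJ) \/
           (IsHam2 (htk k) EQ EJ \/ IsHam1 (htk k.+1) EQ EJ).
  by case: H => H; [left; left | left; right | right; left | right; right].
have [Y [YJ herm_or_skewY ->]] : exists Y, [/\ lie Y J = 0,
    herm_mx J \/ skew_mx J -> herm_mx Y \/ skew_mx Y & EJ q J = ham_field q Y J].
  case: H => H.
    have [_ eJ] := agree_hk k_gt0 H q J reg_q.
    by exists (J ^+ k); split; [exact: lieXl | exact: herm_or_skewX | exact: eJ].
  have [_ eJ] := agree_htk k_gt0 H q J reg_q.
  exists (- ci *: J ^+ k); split; last exact: eJ.
    by rewrite lieZl lieXl scaler0.
  by move=> /(herm_or_skewX _ k)/herm_or_skew_NciZ.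
split=> [/plusp_eq0 hJ | /minusp_eq0 sJ]; [apply/plusp_eq0 | apply/minusp_eq0].
  exact: (ham_field_herm_or_skew q _ _ YJ (herm_or_skewY (or_introl hJ))).1.
exact: (ham_field_herm_or_skew q _ _ YJ (herm_or_skewY (or_intror sJ))).2.
Qed.

Lemma odd_double_pred {l} : (0 < l)%N -> odd (2 * l - 1).
Proof. by move=> l_gt0; rewrite oddB ?oddM //; lia. Qed.

Lemma restriction_minus_hk k : (0 < k)%N -> forall EQ EJ,
  IsHam2 (hk k) EQ EJ \/ IsHam1 (hk k.+1) EQ EJ ->
  forall q J, reg q -> plusp J = 0 ->
    (forall j, rc (EQ q J j) = (minusp J ^+ k) j j) /\
    minusp (EJ q J) = lie (Rq q (minusp J ^+ k)) (minusp J).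
Proof.
move=> k_gt0 EQ EJ H q J reg_q /plusp_eq0 hJ.
have [eQ eJ] := agree_hk k_gt0 H q J reg_q; have hJk := herm_mxX _ k hJ.
rewrite minusp_id // eJ; split=> [j|]; first by rewrite eQ; apply: herm_mx_diag.
by rewrite /ham_flow ham_field_herm // minusp_id //; apply: herm_lie_Rq.
Qed.

Lemma restriction_minus_htk_vanish k : (0 < k)%N -> forall EQ EJ,
  IsHam2 (htk k) EQ EJ \/ IsHam1 (htk k.+1) EQ EJ ->
  forall q J, reg q -> plusp J = 0 -> (forall j, EQ q J j = 0) /\ EJ q J = 0.
Proof.
move=> k_gt0 EQ EJ H q J reg_q /plusp_eq0 hJ.
apply: (agree_vanish (agree_htk k_gt0 H) reg_q); first exact/skew_mx_NciZ/herm_mxX.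
by rewrite lieZl lieXl scaler0.
Qed.

Lemma restriction_plus_hk_odd_vanish l : (0 < l)%N -> forall EQ EJ,
  IsHam2 (hk (2 * l - 1)) EQ EJ \/ IsHam1 (hk (2 * l)) EQ EJ ->
  forall q J, reg q -> minusp J = 0 -> (forall j, EQ q J j = 0) /\ EJ q J = 0.
Proof.
move=> l_gt0 EQ EJ H q J reg_q /minusp_eq0 sJ.
have odd_k := odd_double_pred l_gt0; set k := (2 * l - 1)%N in H odd_k.
have k_gt0 : (0 < k)%N by rewrite /k; lia.
rewrite (_ : (2 * l)%N = k.+1) in H; last by rewrite /k; lia.
apply: (agree_vanish (agree_hk k_gt0 H) reg_q); first exact: skew_mxX_odd.
exact: lieXl.
Qed.

Lemma restriction_plus_htk_even_vanish l : (0 < l)%N -> forall EQ EJ,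
  IsHam2 (htk (2 * l)) EQ EJ \/ IsHam1 (htk (2 * l + 1)) EQ EJ ->
  forall q J, reg q -> minusp J = 0 -> (forall j, EQ q J j = 0) /\ EJ q J = 0.
Proof.
move=> l_gt0 EQ EJ H q J reg_q /minusp_eq0 sJ.
rewrite addn1 in H; have k_gt0 : (0 < 2 * l)%N by lia.
apply: (agree_vanish (agree_htk k_gt0 H) reg_q).
  by apply/skew_mx_NciZ/skew_mxX_even; rewrite // oddM.
by rewrite lieZl lieXl scaler0.
Qed.

Lemma restriction_plus_hk_even l : (0 < l)%N -> forall EQ EJ,
  IsHam2 (hk (2 * l)) EQ EJ \/ IsHam1 (hk (2 * l + 1)) EQ EJ ->
  forall q J, reg q -> minusp J = 0 ->
    (forall j, EQ q J j = cre ((plusp J ^+ (2 * l)) j j)) /\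
    plusp (EJ q J) = lie (Rq q (plusp J ^+ (2 * l))) (plusp J).
Proof.
move=> l_gt0 EQ EJ H q J reg_q /minusp_eq0 sJ.
rewrite addn1 in H; have k_gt0 : (0 < 2 * l)%N by lia.
have [eQ eJ] := agree_hk k_gt0 H q J reg_q.
have hJk : herm_mx (J ^+ (2 * l)) by apply: skew_mxX_even; rewrite // oddM.
rewrite plusp_id // eJ; split=> [j|]; first exact: eQ.
by rewrite /ham_flow ham_field_herm // plusp_id //; apply: skew_lie_Rq.
Qed.

Lemma restriction_plus_htk_odd l : (0 < l)%N -> forall EQ EJ,
  IsHam2 (htk (2 * l - 1)) EQ EJ \/ IsHam1 (htk (2 * l)) EQ EJ ->
  forall q J, reg q -> minusp J = 0 ->
    (forall j, EQ q J j = cre ((- ci *: plusp J ^+ (2 * l - 1)) j j)) /\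
    plusp (EJ q J) = lie (- ci *: Rq q (plusp J ^+ (2 * l - 1))) (plusp J).
Proof.
move=> l_gt0 EQ EJ H q J reg_q /minusp_eq0 sJ.
have odd_k := odd_double_pred l_gt0; set k := (2 * l - 1)%N in H odd_k *.
have k_gt0 : (0 < k)%N by rewrite /k; lia.
rewrite (_ : (2 * l)%N = k.+1) in H; last by rewrite /k; lia.
have [eQ eJ] := agree_htk k_gt0 H q J reg_q.
have hY : herm_mx (- ci *: J ^+ k) by apply/herm_mx_NciZ/skew_mxX_odd.
rewrite plusp_id // eJ; split=> [j|]; first exact: eQ.
rewrite /ham_flow ham_field_herm // plusp_id; last exact: skew_lie_Rq.
by rewrite RqZ.
Qed.

End HamiltonianFields.

Lemma hamiltonian_fields_explicit (R : realType) (n : nat) k : (0 < k)%N ->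
    let FQ : vfq R n := fun q J j => cre ((J ^+ k) j j) in
    let FJ : vfJ R n := fun q J =>
      (2%:R)^-1 *: lie (Rq q (J ^+ k + adj (J ^+ k)) + (adj (J ^+ k) - J ^+ k)) J in
    let tFQ : vfq R n := fun q J j => cre ((- ci *: J ^+ k) j j) in
    let tFJ : vfJ R n := fun q J =>
      (2%:R)^-1 *: lie (ci *: Rq q (adj (J ^+ k) - J ^+ k)
                        + ci *: (J ^+ k + adj (J ^+ k))) J in
    (forall EQ EJ, IsHam2 (hk k) EQ EJ <-> agree EQ EJ FQ FJ) /\
    (forall EQ EJ, IsHam1 (hk k.+1) EQ EJ <-> agree EQ EJ FQ FJ) /\
    (forall EQ EJ, IsHam2 (htk k) EQ EJ <-> agree EQ EJ tFQ tFJ) /\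
    (forall EQ EJ, IsHam1 (htk k.+1) EQ EJ <-> agree EQ EJ tFQ tFJ).
Proof.
move=> k_gt0 FQ FJ tFQ tFJ.
have -> : tFJ = ham_flow (fun _ J => - ci *: J ^+ k).
  by apply/funext => q; apply/funext => J; apply: ham_field_NciZ.
have [H2 H1] := IsHam_hk (R:=R) (n:=n) k_gt0.
have [tH2 tH1] := IsHam_htk (R:=R) (n:=n) k_gt0.
by split; [exact: H2 | split; [exact: H1 | split; [exact: tH2 | exact: tH1]]].
Qed.

Theorem proposition3p8 (R : realType) (n : nat) :
  (forall k : nat, (0 < k)%N ->
    let FQ : vfq R n := fun q J j => cre ((J ^+ k) j j) in
    let FJ : vfJ R n := fun q J =>
      (2%:R)^-1 *: lie (Rq q (J ^+ k + adj (J ^+ k)) + (adj (J ^+ k) - J ^+ k)) J in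
    let tFQ : vfq R n := fun q J j => cre ((- ci *: J ^+ k) j j) in
    let tFJ : vfJ R n := fun q J =>
      (2%:R)^-1 *: lie (ci *: Rq q (adj (J ^+ k) - J ^+ k)
                        + ci *: (J ^+ k + adj (J ^+ k))) J in
    (forall EQ EJ, IsHam2 (hk k) EQ EJ <-> agree EQ EJ FQ FJ) /\
    (forall EQ EJ, IsHam1 (hk k.+1) EQ EJ <-> agree EQ EJ FQ FJ) /\
    (forall EQ EJ, IsHam2 (htk k) EQ EJ <-> agree EQ EJ tFQ tFJ) /\
    (forall EQ EJ, IsHam1 (htk k.+1) EQ EJ <-> agree EQ EJ tFQ tFJ)) /\
  (forall k : nat, (0 < k)%N -> forall (EQ : vfq R n) (EJ : vfJ R n),
    [\/ IsHam2 (hk k) EQ EJ, IsHam1 (hk k.+1) EQ EJ,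
        IsHam2 (htk k) EQ EJ | IsHam1 (htk k.+1) EQ EJ] ->
    forall q J, reg q ->
      (plusp J = 0 -> plusp (EJ q J) = 0) /\
      (minusp J = 0 -> minusp (EJ q J) = 0)) /\
  (forall k : nat, (0 < k)%N -> forall (EQ : vfq R n) (EJ : vfJ R n),
    IsHam2 (hk k) EQ EJ \/ IsHam1 (hk k.+1) EQ EJ ->
    forall q J, reg q -> plusp J = 0 ->
      (forall j, rc (EQ q J j) = (minusp J ^+ k) j j) /\
      minusp (EJ q J) = lie (Rq q (minusp J ^+ k)) (minusp J)) /\
  (forall k : nat, (0 < k)%N -> forall (EQ : vfq R n) (EJ : vfJ R n),
    IsHam2 (htk k) EQ EJ \/ IsHam1 (htk k.+1) EQ EJ ->
    forall q J, reg q -> plusp J = 0 ->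
      (forall j, EQ q J j = 0) /\ EJ q J = 0) /\
  (forall l : nat, (0 < l)%N -> forall (EQ : vfq R n) (EJ : vfJ R n),
    IsHam2 (hk (2 * l - 1)) EQ EJ \/ IsHam1 (hk (2 * l)) EQ EJ ->
    forall q J, reg q -> minusp J = 0 ->
      (forall j, EQ q J j = 0) /\ EJ q J = 0) /\
  (forall l : nat, (0 < l)%N -> forall (EQ : vfq R n) (EJ : vfJ R n),
    IsHam2 (htk (2 * l)) EQ EJ \/ IsHam1 (htk (2 * l + 1)) EQ EJ ->
    forall q J, reg q -> minusp J = 0 ->
      (forall j, EQ q J j = 0) /\ EJ q J = 0) /\
  (forall l : nat, (0 < l)%N -> forall (EQ : vfq R n) (EJ : vfJ R n),
    IsHam2 (hk (2 * l)) EQ EJ \/ IsHam1 (hk (2 * l + 1)) EQ EJ ->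
    forall q J, reg q -> minusp J = 0 ->
      (forall j, EQ q J j = cre ((plusp J ^+ (2 * l)) j j)) /\
      plusp (EJ q J) = lie (Rq q (plusp J ^+ (2 * l))) (plusp J)) /\
  (forall l : nat, (0 < l)%N -> forall (EQ : vfq R n) (EJ : vfJ R n),
    IsHam2 (htk (2 * l - 1)) EQ EJ \/ IsHam1 (htk (2 * l)) EQ EJ ->
    forall q J, reg q -> minusp J = 0 ->
      (forall j, EQ q J j = cre ((- ci *: plusp J ^+ (2 * l - 1)) j j)) /\
      plusp (EJ q J) = lie (- ci *: Rq q (plusp J ^+ (2 * l - 1))) (plusp J)).
Proof.
split; first exact: hamiltonian_fields_explicit.
split; first exact: hamiltonian_fields_tangent.
split; first exact: restriction_minus_hk.
split; first exact: restriction_minus_htk_vanish.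
split; first exact: restriction_plus_hk_odd_vanish.
split; first exact: restriction_plus_htk_even_vanish.
split; first exact: restriction_plus_hk_even.
exact: restriction_plus_htk_odd.
Qed.
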